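(* For all $n\ge 1$, $|F_n(321,3124,4123)|=F_{n+1}-1$, where $F_n$ is the $n$-th Fibonacci number with $F_0=F_1=1$ and $F_n=F_{n-1}+F_{n-2}$ for $n\ge 2$.
   Context: A permutation $\pi$ avoids a classical pattern $p\in S_k$ if no subsequence of $\pi$ of length $k$ is order-isomorphic to $p$. A Fishburn permutation is a permutation $\pi=\pi_1\cdots\pi_n$ of $[n]$ for which there are no indices $i<j$ with $\pi_j<\pi_i<\pi_{i+1}$ and $\pi_i=\pi_j+1$. $F_n(\sigma_1,\dots,\sigma_k)$ denotes the set of Fishburn permutations of length $n$ avoiding each of the classical patterns $\sigma_1,\dots,\sigma_k$. *)

From mathcomp Require Import all_boot all_order all_fingroup.
Set Implicit Arguments. Unset Strict Implicit. Unset Printing Implicit Defensive.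

(* A permutation of [n] is represented as s : {perm 'I_n}, with pi_{i+1} = s i
   (0-based positions and values; only relative order matters). *)

Definition contains_pattern (n : nat) (s : {perm 'I_n}) (p : seq nat) : bool :=
  [exists f : {ffun 'I_(size p) -> 'I_n},
    [forall a : 'I_(size p), forall b : 'I_(size p),
       ((a < b)%N ==> (f a < f b)%N) &&
       ((s (f a) < s (f b))%N == (nth 0 p a < nth 0 p b)%N)]].

Definition avoids (n : nat) (s : {perm 'I_n}) (p : seq nat) : bool :=
  ~~ contains_pattern s p.

Definition fishburn (n : nat) (s : {perm 'I_n}) : bool :=
  ~~ [exists i : 'I_n, exists j : 'I_n, exists i1 : 'I_n,
      [&& (i < j)%N, val i1 == (val i).+1,
          (s j < s i)%N, (s i < s i1)%N & val (s i) == (val (s j)).+1]].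

Definition Fset (n : nat) (pats : seq (seq nat)) : {set {perm 'I_n}} :=
  [set s : {perm 'I_n} | fishburn s && all (avoids s) pats].

Fixpoint fib (n : nat) : nat :=
  match n with
  | 0 => 1
  | 1 => 1
  | (m.+1 as k).+1 => fib k + fib m
  end.

From mathcomp Require Import all_boot all_order all_fingroup.
From mathcomp Require Import zify.

Set Implicit Arguments. Unset Strict Implicit. Unset Printing Implicit Defensive.

(* A permutation is handled through its one-line notation [word s], a
   rearrangement of [0, n), on which the Fishburn condition and pattern
   containment become statements about sequences of naturals.  Call such a
   sequence good when it is Fishburn and avoids 321, 3124 and 4123.

   Classification: a good rearrangement t of [0, n) (n >= 2) is of exactly one
   of the three forms
     1 (+) r   = 0 :: (r shifted by 1),           with r good of length n-1,
     21 (+) r  = 1 :: 0 :: (r shifted by 2),      with r good of length n-2,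
     hook      = 2 0 3 4 ... (n-1) 1              (only when n >= 3),
   according as its first entry is 0, 1 or at least 2.  Conversely each of
   these is good.  Hence the good words are enumerated by the list
   [goodList n], whose length a_n satisfies a_1 = 1, a_2 = 2 and
   a_n = a_{n-1} + a_{n-2} + 1, i.e. a_n = F_{n+1} - 1.  Finally [word] is a
   bijection from the permutations of 'I_n onto the rearrangements of [0, n),
   so the set F_n(321, 3124, 4123) has exactly a_n elements. *)

(* Closes goals [(a < b) = (c < d)] between concrete comparisons. *)
Ltac lia_bool := solve [lia | apply/negbTE; rewrite -leqNgt; lia].

Section RearrangementFacts.
Variables (n : nat) (t : seq nat).
Hypothesis pt : perm_eq t (iota 0 n).

Lemma rearr_uniq : uniq t.
Proof. by rewrite (perm_uniq pt) iota_uniq. Qed.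

Lemma rearr_size : size t = n.
Proof. by rewrite (perm_size pt) size_iota. Qed.

Lemma rearr_mem v : (v \in t) = (v < n).
Proof. by rewrite (perm_mem pt) mem_iota. Qed.

Lemma rearr_nth_inj a b : a < n -> b < n -> nth 0 t a = nth 0 t b -> a = b.
Proof.
move=> an bn e; apply/eqP; rewrite -(nth_uniq 0 _ _ rearr_uniq) ?rearr_size //.
exact/eqP.
Qed.

Lemma rearr_nth_lt a : a < n -> nth 0 t a < n.
Proof. by move=> an; rewrite -rearr_mem mem_nth // rearr_size. Qed.

Lemma rearr_index v : v < n -> index v t < n /\ nth 0 t (index v t) = v.
Proof.
by move=> vn; rewrite -rearr_mem in vn; rewrite nth_index // -rearr_size index_mem.
Qed.

End RearrangementFacts.

Lemma rearr_suffix (u r : seq nat) k n : perm_eq u (iota 0 k) ->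
  perm_eq (u ++ r) (iota 0 (k + n)) -> perm_eq r (iota k n).
Proof.
move=> pu; rewrite iotaD add0n => pt.
rewrite -(perm_cat2r r) perm_sym in pu.
by have := perm_trans pu pt; rewrite perm_cat2l.
Qed.

Lemma rearr_unshift (r : seq nat) k n : perm_eq r (iota k n) ->
  exists2 r', r = map (addn k) r' & perm_eq r' (iota 0 n).
Proof.
rewrite -[in iota k n](addn0 k) iotaDl => pr.
have er : map (addn k) (map (subn^~ k) r) = r.
  rewrite -map_comp map_id_in // => v.
  by rewrite (perm_mem pr) => /mapP [w _ ->] /=; lia.
exists (map (subn^~ k) r) => //.
by apply: (perm_map_inj (@addnI k)); rewrite er.
Qed.

Definition word (n : nat) (s : {perm 'I_n}) : seq nat :=
  [seq val (s i) | i <- enum 'I_n].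

Lemma size_word n (s : {perm 'I_n}) : size (word s) = n.
Proof. by rewrite size_map size_enum_ord. Qed.

Lemma nth_word n (s : {perm 'I_n}) (i : 'I_n) : nth 0 (word s) i = s i.
Proof. by rewrite (nth_map i) ?size_enum_ord // nth_ord_enum. Qed.

Lemma word_inj n : injective (@word n).
Proof.
move=> s1 s2 e; apply/permP => i; apply: val_inj.
by have := congr1 (fun u => nth 0 u i) e; rewrite /= !nth_word.
Qed.

Lemma word_rearr n (s : {perm 'I_n}) : perm_eq (word s) (iota 0 n).
Proof.
apply: uniq_perm; rewrite ?iota_uniq //.
  by rewrite map_inj_uniq ?enum_uniq // => i j /val_inj; exact: perm_inj.
move=> x; rewrite mem_iota add0n; apply/mapP/idP => [[i _ ->] | xn].
  exact: ltn_ord.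
by exists ((perm_inv s) (Ordinal xn)); rewrite ?mem_enum ?permKV.
Qed.

Lemma word_surj n t : perm_eq t (iota 0 n) -> exists s : {perm 'I_n}, word s = t.
Proof.
move=> pt; have tn (i : 'I_n) : nth 0 t i < n by exact: rearr_nth_lt.
pose f (i : 'I_n) : 'I_n := Ordinal (tn i).
have f_inj : injective f.
  move=> i j /(congr1 val) /= e; apply: val_inj.
  exact: (rearr_nth_inj pt (ltn_ord i) (ltn_ord j) e).
exists (perm f_inj); apply: (@eq_from_nth _ 0).
  by rewrite size_word (rearr_size pt).
move=> i; rewrite size_word => iN.
by rewrite -[i]/(val (Ordinal iN)) nth_word permE.
Qed.

Definition fishburn_violation (t : seq nat) : Prop :=
  exists i j, [/\ i < j, j < size t, i.+1 < size t,
                  nth 0 t i < nth 0 t i.+1 & nth 0 t i = (nth 0 t j).+1].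

Definition occurs (p t : seq nat) : Prop :=
  exists g : nat -> nat,
  [/\ forall a b, a < b -> b < size p -> g a < g b,
      forall a, a < size p -> g a < size t &
      forall a b, a < size p -> b < size p ->
        (nth 0 t (g a) < nth 0 t (g b)) = (nth 0 p a < nth 0 p b)].

Lemma fishburn_word n (s : {perm 'I_n}) :
  fishburn s <-> ~ fishburn_violation (word s).
Proof.
rewrite /fishburn; split.
- move/negP=> H [i [j [ij jn i1n h2 h3]]]; apply: H.
  have h1 : nth 0 (word s) j < nth 0 (word s) i by rewrite h3.
  rewrite size_word in jn i1n.
  apply/existsP; exists (Ordinal (ltn_trans ij jn)).
  apply/existsP; exists (Ordinal jn); apply/existsP; exists (Ordinal i1n).
  move: h1 h2 h3.
  rewrite -[i]/(val (Ordinal (ltn_trans ij jn))) -[j]/(val (Ordinal jn)).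
  rewrite -[i.+1]/(val (Ordinal i1n)) !nth_word /= => h1 h2 h3.
  by rewrite ij eqxx h1 h2 /= h3.
- move=> H; apply/negP => /existsP [i /existsP [j /existsP [i1]]].
  case/and5P => ij /eqP hi1 h1 h2 /eqP h3.
  apply: H; exists i, j; rewrite size_word; split => //.
  + by rewrite -hi1 ltn_ord.
  + by rewrite -hi1 !nth_word.
  + by rewrite !nth_word.
Qed.

Lemma avoids_word n (s : {perm 'I_n}) p :
  0 < size p -> avoids s p <-> ~ occurs p (word s).
Proof.
move=> p0; rewrite /avoids /contains_pattern; split.
- move/negP=> H [g [g_incr g_lt g_ord]]; apply: H.
  case: n s g_lt g_ord => [|n] s g_lt g_ord.
    by have := g_lt 0 p0; rewrite size_word.
  apply/existsP; exists [ffun a : 'I_(size p) => (inord (g a) : 'I_n.+1)].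
  apply/forallP => a; apply/forallP => b; rewrite !ffunE.
  have ga := g_lt a (ltn_ord a); have gb := g_lt b (ltn_ord b).
  rewrite size_word in ga gb; rewrite !inordK //; apply/andP; split.
  + by apply/implyP => ab; apply: g_incr.
  + have -> : (inord (g a) : 'I_n.+1) = Ordinal ga by apply: val_inj; rewrite /= inordK.
    have -> : (inord (g b) : 'I_n.+1) = Ordinal gb by apply: val_inj; rewrite /= inordK.
    by rewrite -(g_ord a b) // -!nth_word.
- move=> H; apply/negP => /existsP [f /forallP Hf]; apply: H.
  pose g a := if insub a is Some a' then val (f a') else 0.
  have gE (a' : 'I_(size p)) : g a' = f a' by rewrite /g valK.
  exists g; split.
  + move=> a b ab bp; have ap := ltn_trans ab bp.
    rewrite -[a]/(val (Ordinal ap)) -[b]/(val (Ordinal bp)) !gE.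
    by have /andP [/implyP H _] := forallP (Hf (Ordinal ap)) (Ordinal bp); apply: H.
  + by move=> a ap; rewrite -[a]/(val (Ordinal ap)) gE size_word.
  + move=> a b ap bp; rewrite -[a]/(val (Ordinal ap)) -[b]/(val (Ordinal bp)).
    rewrite !gE !nth_word.
    by have /andP [_ /eqP ->] := forallP (Hf (Ordinal ap)) (Ordinal bp).
Qed.

(* Direct sums with the permutations 1 and 21 placed in front. *)
Definition oplus1 (r : seq nat) : seq nat := 0 :: map (addn 1) r.
Definition oplus21 (r : seq nat) : seq nat := 1 :: 0 :: map (addn 2) r.

Lemma nth_shift k r i : i < size r -> nth 0 (map (addn k) r) i = k + nth 0 r i.
Proof. by move=> ir; rewrite (nth_map 0). Qed.

Lemma rearr_oplus1 n r : perm_eq r (iota 0 n) -> perm_eq (oplus1 r) (iota 0 n.+1).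
Proof.
have -> : iota 0 n.+1 = 0 :: map (addn 1) (iota 0 n) by rewrite -iotaDl.
by move=> pr; rewrite perm_cons perm_map.
Qed.

Lemma rearr_oplus21 n r : perm_eq r (iota 0 n) -> perm_eq (oplus21 r) (iota 0 n.+2).
Proof.
have -> : iota 0 n.+2 = 0 :: 1 :: map (addn 2) (iota 0 n) by rewrite -iotaDl.
move=> pr; rewrite /oplus21.
rewrite -[1 :: 0 :: _]/([:: 1] ++ [:: 0] ++ _) perm_catCA /= !perm_cons.
exact: perm_map.
Qed.

Lemma fishburn_violation_oplus1 r :
  fishburn_violation (oplus1 r) <-> fishburn_violation r.
Proof.
split.
- case=> [[|i] [[|j] [ij jn i1n h2 h3]]] //.
  rewrite /= size_map in jn i1n h2 h3; rewrite !nth_shift in h2 h3; try lia.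
  by exists i, j; split; lia.
- case=> i [j [ij jn i1n h2 h3]]; exists i.+1, j.+1.
  by rewrite /= size_map !nth_shift; try lia; split; lia.
Qed.

Lemma fishburn_violation_oplus21 r :
  fishburn_violation (oplus21 r) <-> fishburn_violation r.
Proof.
split.
- case=> [[|[|i]] [[|[|j]] [ij jn i1n h2 h3]]] //.
  rewrite /= size_map in jn i1n h2 h3; rewrite !nth_shift in h2 h3; try lia.
  by exists i, j; split; lia.
- case=> i [j [ij jn i1n h2 h3]]; exists i.+2, j.+2.
  by rewrite /= size_map !nth_shift; try lia; split; lia.
Qed.

(* A pattern whose first letter exceeds its second cannot use the leading
   minimum of 1 (+) r, so it occurs in 1 (+) r iff it occurs in r. *)
Lemma occurs_oplus1 p r : 1 < size p -> nth 0 p 1 < nth 0 p 0 ->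
  occurs p (oplus1 r) <-> occurs p r.
Proof.
move=> p1 p10; split.
- case=> g [g_incr g_lt g_ord].
  have g_pos a : a < size p -> 0 < g a.
    case: a => [|a] ap; last by have := g_incr 0 a.+1 erefl ap; lia.
    case e: (g 0) => [|x] //; have := g_ord 1 0 p1 (ltnW p1).
    by rewrite e p10 /=; case: (g 1).
  exists (fun a => (g a).-1); split.
  + move=> a b ab bp; have := g_incr a b ab bp.
    have := g_pos a (ltn_trans ab bp); lia.
  + by move=> a ap; have := g_lt a ap; have := g_pos a ap; rewrite /= size_map; lia.
  + move=> a b ap bp; rewrite -(g_ord a b ap bp).
    have := g_lt a ap; have := g_lt b bp; have := g_pos a ap; have := g_pos b bp.
    rewrite /= size_map.
    case: (g a) => [|x] //; case: (g b) => [|y] // _ _ yr xr /=.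
    by rewrite !nth_shift //; lia.
- case=> g [g_incr g_lt g_ord]; exists (fun a => (g a).+1); split.
  + by move=> a b ab bp; have := g_incr a b ab bp.
  + by move=> a ap; have := g_lt a ap; rewrite /= size_map.
  + by move=> a b ap bp; rewrite -(g_ord a b ap bp) /= !nth_shift ?g_lt //; lia.
Qed.

(* Likewise, a pattern whose first letter exceeds its next two letters
   cannot use the front block 21 of 21 (+) r. *)
Lemma occurs_oplus21 p r : 2 < size p -> nth 0 p 1 < nth 0 p 0 ->
  nth 0 p 2 < nth 0 p 0 -> occurs p (oplus21 r) <-> occurs p r.
Proof.
move=> p2 p10 p20; split.
- case=> g [g_incr g_lt g_ord].
  have p1 : 1 < size p by apply: ltn_trans p2.
  have g01 := g_incr 0 1 erefl p1; have g12 := g_incr 1 2 erefl p2.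
  have h1 := g_ord 1 0 p1 (ltnW p1); have h2 := g_ord 2 0 p2 (ltnW (ltnW p2)).
  rewrite p10 p20 in h1 h2.
  have b1 := g_lt 1 p1; have b2 := g_lt 2 p2; rewrite /= size_map in b1 b2.
  have g0_big : 1 < g 0.
  { move: g01 g12 h1 h2 b1 b2.
    case: (g 0) => [|[|x]] //; case: (g 1) => [|[|u]] //; case: (g 2) => [|[|v]] //=.
    all: try (move=> *; lia).
    all: by move=> _ _ h1 h2 b1 b2; move: h1 h2; rewrite ?nth_shift; try lia. }
  have g_big a : a < size p -> 1 < g a.
    by case: a => [|a] ap //; have := g_incr 0 a.+1 erefl ap; lia.
  exists (fun a => (g a).-2); split.
  + move=> a b ab bp; have := g_incr a b ab bp.
    have := g_big a (ltn_trans ab bp); lia.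
  + by move=> a ap; have := g_lt a ap; have := g_big a ap; rewrite /= size_map; lia.
  + move=> a b ap bp; rewrite -(g_ord a b ap bp).
    have := g_lt a ap; have := g_lt b bp; have := g_big a ap; have := g_big b bp.
    rewrite /= size_map.
    case: (g a) => [|[|x]] //; case: (g b) => [|[|y]] // _ _ yr xr /=.
    by rewrite !nth_shift //; lia.
- case=> g [g_incr g_lt g_ord]; exists (fun a => (g a).+2); split.
  + by move=> a b ab bp; have := g_incr a b ab bp.
  + by move=> a ap; have := g_lt a ap; rewrite /= size_map.
  + by move=> a b ap bp; rewrite -(g_ord a b ap bp) /= !nth_shift ?g_lt //; lia.
Qed.

Definition pat321 : seq nat := [:: 3; 2; 1].
Definition pat3124 : seq nat := [:: 3; 1; 2; 4].
Definition pat4123 : seq nat := [:: 4; 1; 2; 3].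

Lemma occurs321_at t i j k : i < j -> j < k -> k < size t ->
  nth 0 t k < nth 0 t j < nth 0 t i -> occurs pat321 t.
Proof.
move=> ij jk kt /andP [h1 h2]; exists (fun a => nth 0 [:: i; j; k] a); split.
- move=> a b ab bp; case: a ab => [|[|[|a]]]; case: b bp => [|[|[|b]]] //= *; lia.
- by move=> a ap; case: a ap => [|[|[|a]]] //= *; lia.
- move=> a b ap bp.
  by case: a ap => [|[|[|a]]]; case: b bp => [|[|[|b]]] //= *; lia_bool.
Qed.

Lemma occurs3124_at t i j k l : i < j -> j < k -> k < l -> l < size t ->
  nth 0 t j < nth 0 t k < nth 0 t i -> nth 0 t i < nth 0 t l -> occurs pat3124 t.
Proof.
move=> ij jk kl lt /andP [h1 h2] h3.
exists (fun a => nth 0 [:: i; j; k; l] a); split.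
- move=> a b ab bp.
  by case: a ab => [|[|[|[|a]]]]; case: b bp => [|[|[|[|b]]]] //= *; lia.
- by move=> a ap; case: a ap => [|[|[|[|a]]]] //= *; lia.
- move=> a b ap bp.
  by case: a ap => [|[|[|[|a]]]]; case: b bp => [|[|[|[|b]]]] //= *; lia_bool.
Qed.

Lemma occurs4123_at t i j k l : i < j -> j < k -> k < l -> l < size t ->
  nth 0 t j < nth 0 t k < nth 0 t l -> nth 0 t l < nth 0 t i -> occurs pat4123 t.
Proof.
move=> ij jk kl lt /andP [h1 h2] h3.
exists (fun a => nth 0 [:: i; j; k; l] a); split.
- move=> a b ab bp.
  by case: a ab => [|[|[|[|a]]]]; case: b bp => [|[|[|[|b]]]] //= *; lia.
- by move=> a ap; case: a ap => [|[|[|[|a]]]] //= *; lia.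
- move=> a b ap bp.
  by case: a ap => [|[|[|[|a]]]]; case: b bp => [|[|[|[|b]]]] //= *; lia_bool.
Qed.

Definition good (t : seq nat) : Prop :=
  [/\ ~ fishburn_violation t, ~ occurs pat321 t, ~ occurs pat3124 t
    & ~ occurs pat4123 t].

Lemma good_small t : size t <= 1 -> good t.
Proof.
move=> st; have short p : 1 < size p -> ~ occurs p t.
  by move=> p1 [g [g_incr g_lt _]]; have := g_incr 0 1 erefl p1; have := g_lt 1 p1; lia.
by split; try exact: short; case=> i [j [ij jt _ _ _]]; lia.
Qed.

Lemma good_transfer t t' :
  (fishburn_violation t <-> fishburn_violation t') ->
  (occurs pat321 t <-> occurs pat321 t') -> (occurs pat3124 t <-> occurs pat3124 t') ->
  (occurs pat4123 t <-> occurs pat4123 t') -> (good t <-> good t').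
Proof. by move=> e1 e2 e3 e4; split=> -[h1 h2 h3 h4]; split; tauto. Qed.

Lemma good_oplus1 r : good (oplus1 r) <-> good r.
Proof.
by apply: good_transfer; [exact: fishburn_violation_oplus1 | exact: occurs_oplus1..].
Qed.

Lemma good_oplus21 r : good (oplus21 r) <-> good r.
Proof.
by apply: good_transfer; [exact: fishburn_violation_oplus21 | exact: occurs_oplus21..].
Qed.

Definition hook (k : nat) : seq nat := 2 :: 0 :: rcons (iota 3 k) 1.

Lemma size_hook k : size (hook k) = k.+3.
Proof. by rewrite /= size_rcons size_iota. Qed.

Lemma nth_hook k i : i < k.+3 ->
  (i = 0 /\ nth 0 (hook k) i = 2) \/ (i = 1 /\ nth 0 (hook k) i = 0) \/
  (2 <= i <= k.+1 /\ nth 0 (hook k) i = i.+1) \/ (i = k.+2 /\ nth 0 (hook k) i = 1).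
Proof.
case: i => [|[|i]] ik; [by left | by right; left |].
rewrite /= nth_rcons size_iota; case: ltnP => h.
  by rewrite nth_iota //; right; right; left; split; lia.
have -> : i = k by lia.
by rewrite eqxx; right; right; right.
Qed.

Lemma hook_rearr k : perm_eq (hook k) (iota 0 k.+3).
Proof.
apply: uniq_perm; rewrite ?iota_uniq //.
  by rewrite /hook /= rcons_uniq !inE !mem_rcons !inE !mem_iota iota_uniq /=; lia.
by move=> x; rewrite /hook !inE mem_rcons !inE !mem_iota; apply/idP/idP; lia.
Qed.

(* Every ascent t_i < t_{i+1} starts at 0 or at an entry
   v >= 3 with v - 1 to its left, so there is no Fishburn violation; the only
   entries preceded by a larger one are 0 and the final 1, which leaves no
   room for 321, 3124 or 4123. *)
Lemma good_hook k : good (hook k).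
Proof.
have sz := size_hook k.
have val_at i : i < k.+3 -> _ := nth_hook (k := k) (i := i).
split.
- case=> i [j [ij jt i1t h2 h3]]; rewrite sz in jt i1t.
  by have := val_at _ i1t; have := val_at _ jt; have := val_at _ (ltnW i1t); lia.
- case=> g [g_incr g_lt g_ord]; rewrite sz in g_lt.
  have := g_incr 0 1 erefl erefl; have := g_incr 1 2 erefl erefl.
  have : nth 0 (hook k) (g 1) < nth 0 (hook k) (g 0) by rewrite g_ord.
  have : nth 0 (hook k) (g 2) < nth 0 (hook k) (g 1) by rewrite g_ord.
  have := val_at _ (g_lt 0 erefl); have := val_at _ (g_lt 1 erefl).
  have := val_at _ (g_lt 2 erefl); have := g_lt 2 erefl.
  lia.
- case=> g [g_incr g_lt g_ord]; rewrite sz in g_lt.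
  have := g_incr 0 1 erefl erefl; have := g_incr 1 2 erefl erefl.
  have := g_incr 2 3 erefl erefl.
  have : nth 0 (hook k) (g 1) < nth 0 (hook k) (g 2) by rewrite g_ord.
  have : nth 0 (hook k) (g 2) < nth 0 (hook k) (g 0) by rewrite g_ord.
  have : nth 0 (hook k) (g 0) < nth 0 (hook k) (g 3) by rewrite g_ord.
  have := val_at _ (g_lt 0 erefl); have := val_at _ (g_lt 1 erefl).
  have := val_at _ (g_lt 2 erefl); have := val_at _ (g_lt 3 erefl).
  have := g_lt 3 erefl.
  lia.
- case=> g [g_incr g_lt g_ord]; rewrite sz in g_lt.
  have := g_incr 0 1 erefl erefl; have := g_incr 1 2 erefl erefl.
  have := g_incr 2 3 erefl erefl.
  have : nth 0 (hook k) (g 1) < nth 0 (hook k) (g 2) by rewrite g_ord.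
  have : nth 0 (hook k) (g 2) < nth 0 (hook k) (g 3) by rewrite g_ord.
  have : nth 0 (hook k) (g 3) < nth 0 (hook k) (g 0) by rewrite g_ord.
  have := val_at _ (g_lt 0 erefl); have := val_at _ (g_lt 1 erefl).
  have := val_at _ (g_lt 2 erefl); have := val_at _ (g_lt 3 erefl).
  have := g_lt 3 erefl.
  lia.
Qed.

(* In a good rearrangement, a positive first entry is followed by a smaller
   one: otherwise t_0 - 1 occurs later and t_0 t_1 ... (t_0 - 1) violates
   the Fishburn condition. *)
Lemma good_head_desc n t : perm_eq t (iota 0 n.+2) -> good t ->
  0 < nth 0 t 0 -> nth 0 t 1 < nth 0 t 0.
Proof.
move=> pt [no_fish _ _ _] x_pos.
have y_lt := rearr_nth_lt pt (erefl : 1 < n.+2).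
rewrite ltnNge leq_eqVlt; apply/negP => /orP [/eqP e | xy].
  by have := rearr_nth_inj pt (erefl : 0 < n.+2) (erefl : 1 < n.+2) e.
have x_lt := rearr_nth_lt pt (erefl : 0 < n.+2).
have pred_x_lt : (nth 0 t 0).-1 < n.+2 by lia.
have [jn jv] := rearr_index pt pred_x_lt.
set j := index _ _ in jn jv.
have j0 : j != 0 by apply/eqP => e; move: jv; rewrite e; lia.
have j1 : j != 1 by apply/eqP => e; move: jv; rewrite e; lia.
by apply: no_fish; exists 0, j; rewrite (rearr_size pt); split; lia.
Qed.

(* A good rearrangement starting with at least 2 starts with 2 0:
   a later 0 would give 321 with t_0 > t_1 > 0, and a first entry above 2
   followed by 0 gives 4123 or 321 with the later entries 1 and 2. *)
Lemma good_head_hook n t : perm_eq t (iota 0 n.+2) -> good t ->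
  2 <= nth 0 t 0 -> nth 0 t 0 = 2 /\ nth 0 t 1 = 0.
Proof.
move=> pt gt x2; have y_lt := good_head_desc pt gt (ltnW x2).
case: gt => _ no321 _ no4123.
have sz := rearr_size pt; have x_lt := rearr_nth_lt pt (erefl : 0 < n.+2).
have y0 : nth 0 t 1 = 0.
  case ey: (nth 0 t 1) => [|y'] //; exfalso.
  have [jn jv] := rearr_index pt (erefl : 0 < n.+2).
  set j := index _ _ in jn jv.
  have j0 : j != 0 by apply/eqP => e; move: jv; rewrite e; lia.
  have j1 : j != 1 by apply/eqP => e; move: jv; rewrite e ey.
  by apply: no321; apply: (@occurs321_at t 0 1 j); rewrite ?sz //; lia.
split => //; case: (ltngtP (nth 0 t 0) 2) => // x3; [lia | exfalso].
have one_lt : 1 < n.+2 by lia.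
have two_lt : 2 < n.+2 by lia.
have [j1n j1v] := rearr_index pt one_lt; have [j2n j2v] := rearr_index pt two_lt.
set j1 := index 1 t in j1n j1v; set j2 := index 2 t in j2n j2v.
have a1 : j1 != 0 by apply/eqP => e; move: j1v; rewrite e; lia.
have a2 : j2 != 0 by apply/eqP => e; move: j2v; rewrite e; lia.
have b1 : j1 != 1 by apply/eqP => e; move: j1v; rewrite e y0.
have b2 : j2 != 1 by apply/eqP => e; move: j2v; rewrite e y0.
case: (ltngtP j1 j2) => jj.
- by apply: no4123; apply: (@occurs4123_at t 0 1 j1 j2); rewrite ?sz //; lia.
- by apply: no321; apply: (@occurs321_at t 0 j2 j1); rewrite ?sz //; lia.
- by move: j1v; rewrite jj j2v.
Qed.

Section HookShape.
Variables (n : nat) (m : seq nat).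

(* In a good rearrangement 2 0 m z, the last entry z is 1: otherwise
   z >= 3 and 1 lies in m, so 2 0 1 z is an occurrence of 3124. *)
Lemma good_hook_last z : perm_eq (2 :: 0 :: rcons m z) (iota 0 n) ->
  good (2 :: 0 :: rcons m z) -> z = 1.
Proof.
set t := 2 :: 0 :: rcons m z => pt [_ _ no3124 _].
case: (z =P 1) => // z1; exfalso.
have sz : size t = n by exact: rearr_size pt.
have t_last : nth 0 t (size m).+2 = z by rewrite /t /= nth_rcons ltnn eqxx.
have last_lt : (size m).+2 < n by rewrite -sz /t /= size_rcons.
have z_big : 2 < z.
  have z_new a : a < 2 -> nth 0 t a != z.
    move=> a2; apply/eqP; rewrite -t_last => /(rearr_nth_inj pt) e.
    by have := e (ltn_trans a2 (ltn_trans _ last_lt)) last_lt; lia.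
  have := z_new 0 isT; have := z_new 1 isT; rewrite /t /=.
  by move: z1 => /eqP; lia.
have one_in : 1 \in m.
  have : 1 \in t by rewrite (rearr_mem pt); lia.
  have one_z : (1 == z) = false by apply/eqP => e; apply: z1.
  by rewrite /t !inE mem_rcons !inE one_z.
have one_at : index 1 m < size m by rewrite index_mem.
have t_one : nth 0 t (index 1 m).+2 = 1.
  by rewrite /t /= nth_rcons one_at nth_index.
apply: no3124; apply: (@occurs3124_at t 0 1 (index 1 m).+2 (size m).+2).
all: by rewrite ?t_one ?t_last //; lia.
Qed.

(* In a good rearrangement 2 0 m 1, the block m consists of the values
   3, 4, ... in increasing order: a descent in m followed by the final 1
   would be an occurrence of 321. *)
Lemma good_hook_middle : perm_eq (2 :: 0 :: rcons m 1) (iota 0 n) ->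
  good (2 :: 0 :: rcons m 1) -> m = iota 3 (size m).
Proof.
set t := 2 :: 0 :: rcons m 1 => pt [_ no321 _ _].
have sz : size t = n by exact: rearr_size pt.
have pm : perm_eq m (iota 3 (size m)).
  have rot : perm_eq ([:: 2; 0; 1] ++ m) t.
    by rewrite /t /= !perm_cons perm_sym perm_rcons.
  apply: (@rearr_suffix [:: 2; 0; 1]) => //.
  have -> : 3 + size m = n by rewrite -sz /t /= size_rcons.
  exact: perm_trans rot pt.
have m_uniq : uniq m by rewrite (perm_uniq pm) iota_uniq.
have t_mid i : i < size m -> nth 0 t i.+2 = nth 0 m i.
  by move=> im; rewrite /t /= nth_rcons im.
have t_last : nth 0 t (size m).+2 = 1 by rewrite /t /= nth_rcons ltnn eqxx.
have m_big i : i < size m -> 2 < nth 0 m i.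
  by move=> im; have := mem_nth 0 im; rewrite (perm_mem pm) mem_iota => /andP [].
have m_sorted : sorted ltn m.
  apply/(sortedP 0) => i i1m.
  case: (ltngtP (nth 0 m i) (nth 0 m i.+1)) => // h.
  - have v1 := t_mid i (ltnW i1m); have v2 := t_mid i.+1 i1m.
    have b2 := m_big i.+1 i1m.
    have st : size t = (size m).+3 by rewrite /t /= size_rcons.
    exfalso; apply: no321; apply: (@occurs321_at t i.+2 i.+3 (size m).+2); lia.
  - by move/eqP: h; rewrite nth_uniq ?(ltnW i1m) // => /eqP /n_Sn.
apply: (sorted_eq leq_trans anti_leq) => //; last exact: iota_sorted.
by move: m_sorted; rewrite ltn_sorted_uniq_leq => /andP [].
Qed.

End HookShape.

Lemma good_hookE n t : perm_eq t (iota 0 n.+2) -> good t ->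
  2 <= nth 0 t 0 -> exists2 k, n = k.+1 & t = hook k.
Proof.
move=> pt gt x2; have [x2e y0] := good_head_hook pt gt x2.
have x_lt := rearr_nth_lt pt (erefl : 0 < n.+2); have sz := rearr_size pt.
case: t {x2} pt gt x2e y0 x_lt sz => [|x [|y r]] // pt gt /= x2e y0 x_lt sz.
subst x y; case/lastP: r pt gt sz => [|m z] pt gt /= sz; first by lia.
have z1 := good_hook_last pt gt; subst z.
have mE := good_hook_middle pt gt.
exists (size m); first by move: sz; rewrite (size_rcons m 1); lia.
by rewrite /hook -mE.
Qed.

Fixpoint goodList (n : nat) : seq (seq nat) :=
  match n with
  | 0 => [:: [::]]
  | 1 => [:: [:: 0]]
  | (m.+1 as k).+1 =>
      map oplus1 (goodList k) ++ map oplus21 (goodList m) ++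
      (if m is j.+1 then [:: hook j] else [::])
  end.

Lemma goodListE n : goodList n.+2 =
  map oplus1 (goodList n.+1) ++ map oplus21 (goodList n) ++
  (if n is j.+1 then [:: hook j] else [::]).
Proof. by []. Qed.

Lemma goodList_rearr n t : t \in goodList n -> perm_eq t (iota 0 n).
Proof.
elim/ltn_ind: n t => -[|[|n]] IH t; try by rewrite inE => /eqP ->.
rewrite goodListE !mem_cat => /or3P [/mapP [r rS ->] | /mapP [r rS ->] | ht].
- exact/rearr_oplus1/IH.
- exact/rearr_oplus21/IH.
- by case: n {IH} ht => // k; rewrite inE => /eqP ->; exact: hook_rearr.
Qed.

Lemma goodList_good n t : t \in goodList n -> good t.
Proof.
elim/ltn_ind: n t => -[|[|n]] IH t; try by rewrite inE => /eqP ->; apply: good_small.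
rewrite goodListE !mem_cat => /or3P [/mapP [r rS ->] | /mapP [r rS ->] | ht].
- exact/good_oplus1/(IH n.+1).
- exact/good_oplus21/(IH n).
- by case: n {IH} ht => // k; rewrite inE => /eqP ->; exact: good_hook.
Qed.

Lemma good_goodList n t : perm_eq t (iota 0 n) -> good t -> t \in goodList n.
Proof.
elim/ltn_ind: n t => -[|[|n]] IH t pt gt.
- by rewrite (size0nil (rearr_size pt)) inE.
- have := rearr_size pt; case: t pt {gt} => [|x [|]] // pt _.
  have : x < 1 by rewrite -(rearr_mem pt) inE.
  by rewrite ltnS leqn0 inE => /eqP ->.
have sz := rearr_size pt; rewrite goodListE !mem_cat.
case: (ltnP (nth 0 t 0) 2) => x2; last first.
  by have [k -> ->] := good_hookE pt gt x2; rewrite inE eqxx !orbT.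
case: t pt gt sz x2 => [|x [|y r]] // pt gt _ x2.
case: x x2 pt gt => [|[|x]] // x2 pt gt.
- (* first entry 0: t = 1 (+) r' *)
  have [r' er pr'] :=
    rearr_unshift (rearr_suffix (u := [:: 0]) (k := 1) (n := n.+1) isT pt).
  have gr' : good r' by apply/good_oplus1; rewrite /oplus1 -er.
  by rewrite er -/(oplus1 r') map_f ?IH.
- (* first entry 1, hence second entry 0: t = 21 (+) r' *)
  have y0 : y = 0 by have := good_head_desc pt gt isT; rewrite /=; lia.
  subst y; have [r' er pr'] :=
    rearr_unshift (rearr_suffix (u := [:: 1; 0]) (k := 2) (n := n) isT pt).
  have gr' : good r' by apply/good_oplus21; rewrite /oplus21 -er.
  by rewrite er -/(oplus21 r') map_f ?orbT ?IH.
Qed.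

Lemma goodList_uniq n : uniq (goodList n).
Proof.
elim/ltn_ind: n => -[|[|n]] IH //.
have oplus1_inj : injective oplus1 by move=> r1 r2 [] /(inj_map (@addnI 1)).
have oplus21_inj : injective oplus21 by move=> r1 r2 [] /(inj_map (@addnI 2)).
rewrite goodListE !cat_uniq !map_inj_uniq ?IH //=; apply/and3P; split.
- apply/hasPn => x; rewrite mem_cat => /orP [/mapP [r _ ->] | ].
    by apply/negP => /mapP [r' _].
  by case: n {IH} => // k; rewrite inE => /eqP ->; apply/negP => /mapP [r' _].
- apply/hasPn => x; case: n {IH} => // k; rewrite inE => /eqP ->.
  by apply/negP => /mapP [r' _].
- by case: n {IH}.
Qed.

Lemma fib_gt0 n : 0 < fib n.
Proof.
elim/ltn_ind: n => -[|[|n]] IH //.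
have -> : fib n.+2 = fib n.+1 + fib n by [].
by rewrite addn_gt0 IH.
Qed.

Lemma size_goodList n : 1 <= n -> size (goodList n) = (fib n.+1).-1.
Proof.
elim/ltn_ind: n => -[|[|[|n]]] IH // _.
rewrite goodListE !size_cat !size_map (IH n.+2) // (IH n.+1) // [size _]/=.
have -> : fib n.+4 = fib n.+3 + fib n.+2 by [].
by have := fib_gt0 n.+3; have := fib_gt0 n.+2; lia.
Qed.

Lemma Fset_good n (s : {perm 'I_n}) :
  s \in Fset n [:: pat321; pat3124; pat4123] <-> good (word s).
Proof.
have a321 := avoids_word s (p := pat321) isT.
have a3124 := avoids_word s (p := pat3124) isT.
have a4123 := avoids_word s (p := pat4123) isT.
rewrite inE /= !andbT; split.
- by case/and4P => /fishburn_word f /a321 h1 /a3124 h2 /a4123 h3.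
- by case=> /fishburn_word f /a321 h1 /a3124 h2 /a4123 h3; rewrite f h1 h2 h3.
Qed.

Lemma card_Fset n : #|Fset n [:: pat321; pat3124; pat4123]| = size (goodList n).
Proof.
rewrite cardE -(size_map (@word n)); apply: perm_size; apply: uniq_perm.
- by rewrite map_inj_uniq ?enum_uniq //; exact: word_inj.
- exact: goodList_uniq.
move=> t; apply/mapP/idP => [[s sF ->] | tL].
  by apply: good_goodList; [exact: word_rearr | apply/Fset_good; rewrite -mem_enum].
have [s st] := word_surj (goodList_rearr tL); exists s => //.
by rewrite mem_enum; apply/Fset_good; rewrite st; exact: goodList_good tL.
Qed.

Theorem mainTheorem15 (n : nat) :
  (1 <= n)%N ->
  #|Fset n [:: [:: 3; 2; 1]; [:: 3; 1; 2; 4]; [:: 4; 1; 2; 3]]| = (fib n.+1).-1.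
Proof. by move=> n_pos; rewrite (card_Fset n) size_goodList. Qed.
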